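(* Let $n\ge 1$, $P\ge 0$ and $\mathbf{h}\in\mathbb{R}^n$, and let $$\mathbf{G}=(1+P\|\mathbf{h}\|^2)\mathbf{I}-P\mathbf{h}\mathbf{h}^T .$$ Let $\mathbf{a}^*$ be any minimizer of $f(\mathbf{a})=\mathbf{a}^T\mathbf{G}\mathbf{a}$ over $\mathbf{a}\in\mathbb{Z}^n\setminus\{\mathbf{0}\}$. Then either $\mathbf{a}^*=\pm\mathbf{u}_i$ for some $i$, or there exists $x\in\mathbb{R}$ such that, elementwise, $$\mathbf{a}^*-\tfrac12\mathbf{1}<\mathbf{h}x<\mathbf{a}^*+\tfrac12\mathbf{1},$$ and consequently $\mathbf{a}^*=\lfloor \mathbf{h}x\rceil$ (componentwise rounding to the nearest integer).
   Context: $\|\cdot\|$ is the Euclidean norm, $\mathbf{I}$ the $n\times n$ identity, $\mathbf{1}$ the all-ones vector, $\mathbf{u}_i$ the $i$-th standard unit vector of $\mathbb{R}^n$. Vector inequalities are elementwise. The matrix $\mathbf{G}$ is positive definite (its eigenvalues are $1$ and $1+P\|\mathbf{h}\|^2$), so a minimizer exists. *)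

(* classical reals. Vectors of R^n / Z^n are functions nat -> R / nat -> Z,
   only the indices 0..n-1 being relevant. *)
From Stdlib Require Import Reals List.
Import ListNotations.
Open Scope R_scope.

Definition vsum (n : nat) (f : nat -> R) : R :=
  fold_right Rplus 0 (map f (seq 0 n)).

Definition normsq (n : nat) (h : nat -> R) : R := vsum n (fun i => h i ^ 2).

Definition kdelta (i j : nat) : R := if Nat.eqb i j then 1 else 0.

Definition Gmat (n : nat) (P : R) (h : nat -> R) (i j : nat) : R :=
  (1 + P * normsq n h) * kdelta i j - P * h i * h j.

Definition qf (n : nat) (P : R) (h : nat -> R) (a : nat -> Z) : R :=
  vsum n (fun i => vsum n (fun j => IZR (a i) * Gmat n P h i j * IZR (a j))).

Definition nonzero (n : nat) (a : nat -> Z) : Prop := exists i, (i < n)%nat /\ a i <> 0%Z.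

Definition is_minimizer (n : nat) (P : R) (h : nat -> R) (a : nat -> Z) : Prop :=
  nonzero n a /\ forall b : nat -> Z, nonzero n b -> qf n P h a <= qf n P h b.

Definition unitZ (i j : nat) : Z := if Nat.eqb i j then 1%Z else 0%Z.

Definition round (y : R) : Z := Int_part (y + / 2).

(* Write A = 1 + P ||h||^2, so that f(a) = A ||a||^2 - P (h.a)^2, and for the
   minimizer a let x = P (h.a) / A.  Moving a by one step s = +-1 along coordinate i
   changes f by A (1 + 2 s (a_i - h_i x)) - P h_i^2.  Unless a + s u_i = 0, i.e.
   a = -s u_i, minimality makes this change nonnegative, so A (1 + 2 s (a_i - h_i x)) >= P h_i^2.
   If P h_i^2 > 0 this gives s (a_i - h_i x) > -1/2 directly; otherwise h_i x = 0 and
   integrality of a_i upgrades s a_i >= -1/2 to s a_i >= 0.  Both signs together give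
   |a_i - h_i x| < 1/2. *)

From Pilot Require Import Defs.
From Stdlib Require Import Reals Lra Lia Psatz ZArith List Classical.
Open Scope R_scope.

Lemma fold_right_Rplus_init (l : list R) (c : R) :
  fold_right Rplus c l = fold_right Rplus 0 l + c.
Proof. induction l; simpl; [lra | rewrite IHl; lra]. Qed.

Lemma vsum_S n f : vsum (S n) f = vsum n f + f n.
Proof.
  unfold vsum. rewrite seq_S, map_app, fold_right_app. simpl.
  rewrite fold_right_Rplus_init. lra.
Qed.

Lemma eq_vsum n f g : (forall i, (i < n)%nat -> f i = g i) -> vsum n f = vsum n g.
Proof.
  induction n; intros H; [reflexivity|].
  rewrite !vsum_S, IHn by (intros; apply H; lia). rewrite H by lia. reflexivity.
Qed.

Lemma vsumD n f g : vsum n (fun i => f i + g i) = vsum n f + vsum n g.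
Proof. induction n; [unfold vsum; simpl; lra|]. rewrite !vsum_S, IHn. lra. Qed.

Lemma vsumZ n c f : vsum n (fun i => c * f i) = c * vsum n f.
Proof. induction n; [unfold vsum; simpl; lra|]. rewrite !vsum_S, IHn. lra. Qed.

Lemma vsum_kdelta n f i : (i < n)%nat -> vsum n (fun j => f j * kdelta i j) = f i.
Proof.
  induction n; intros Hi; [lia|]. rewrite vsum_S.
  destruct (Nat.eq_dec i n) as [->|Hne].
  - rewrite (eq_vsum n _ (fun j => 0 * f j)).
    + rewrite vsumZ. unfold kdelta. rewrite Nat.eqb_refl. lra.
    + intros j Hj. unfold kdelta. destruct (Nat.eqb_spec n j); [lia|lra].
  - rewrite IHn by lia. unfold kdelta. destruct (Nat.eqb_spec i n); [lia|lra].
Qed.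

Lemma normsq_ge0 n h : 0 <= normsq n h.
Proof. induction n; unfold normsq in *; [unfold vsum; simpl; lra|]. rewrite vsum_S. nra. Qed.

Lemma IZR_unitZ i j : IZR (unitZ i j) = kdelta i j.
Proof. unfold unitZ, kdelta. destruct (Nat.eqb i j); reflexivity. Qed.

Section QuadraticForm.

Variables (n : nat) (P : R) (h : nat -> R).

Let A := 1 + P * normsq n h.
Let dot (a : nat -> Z) := vsum n (fun i => h i * IZR (a i)).

Definition add_unit (a : nat -> Z) (i : nat) (s : Z) : nat -> Z :=
  fun j => (a j + s * unitZ i j)%Z.

Lemma qf_expand a :
  qf n P h a = A * vsum n (fun i => IZR (a i) ^ 2) - P * dot a ^ 2.
Proof.
  unfold qf.
  rewrite (eq_vsum n _ (fun i => A * IZR (a i) ^ 2 + (- P * dot a) * (h i * IZR (a i)))).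
  - rewrite vsumD, !vsumZ. fold (dot a). ring.
  - intros i Hi.
    rewrite (eq_vsum n _ (fun j => (A * IZR (a i) * IZR (a j)) * kdelta i j
              + (- P * h i * IZR (a i)) * (h j * IZR (a j)))).
    + rewrite vsumD, vsumZ, vsum_kdelta by exact Hi. fold (dot a). ring.
    + intros j Hj. unfold Gmat. fold A. ring.
Qed.

Lemma qf_add_unit a i s : (i < n)%nat ->
  qf n P h (add_unit a i s) - qf n P h a =
  A * (IZR s ^ 2 + 2 * IZR s * IZR (a i))
  - P * (2 * IZR s * h i * dot a + IZR s ^ 2 * h i ^ 2).
Proof.
  intros Hi. rewrite !qf_expand. unfold add_unit, dot.
  rewrite (eq_vsum n (fun j => IZR (a j + s * unitZ i j) ^ 2)
    (fun j => IZR (a j) ^ 2 + (IZR s ^ 2 + 2 * IZR s * IZR (a j)) * kdelta i j)).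
  2:{ intros j _. rewrite plus_IZR, mult_IZR, IZR_unitZ.
      unfold kdelta. destruct (Nat.eqb i j); ring. }
  rewrite (eq_vsum n (fun j => h j * IZR (a j + s * unitZ i j))
    (fun j => h j * IZR (a j) + (IZR s * h j) * kdelta i j)).
  2:{ intros j _. rewrite plus_IZR, mult_IZR, IZR_unitZ. ring. }
  rewrite !vsumD, !vsum_kdelta by exact Hi. ring.
Qed.

Hypothesis HP : 0 <= P.

Lemma A_ge1 : 1 <= A.
Proof. unfold A. pose proof (normsq_ge0 n h). nra. Qed.

Lemma qf_add_sign a i s x : (i < n)%nat -> (s = 1 \/ s = -1)%Z ->
  x = P * dot a / A ->
  qf n P h (add_unit a i s) - qf n P h a =
  A * (1 + 2 * IZR s * (IZR (a i) - h i * x)) - P * h i ^ 2.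
Proof.
  intros Hi Hs ->. pose proof A_ge1.
  rewrite qf_add_unit by exact Hi.
  destruct Hs as [-> | ->]; simpl IZR; field; lra.
Qed.

Lemma Zge0_of_IZR_ge_neg_half z : - / 2 <= IZR z -> (0 <= z)%Z.
Proof.
  intros H. destruct (Z_lt_le_dec z 0) as [Hz|Hz]; [|exact Hz].
  apply Z.lt_le_pred, IZR_le in Hz. simpl in Hz. lra.
Qed.

Lemma sign_step_bound a i s : (i < n)%nat -> (s = 1 \/ s = -1)%Z ->
  qf n P h a <= qf n P h (add_unit a i s) ->
  - / 2 < IZR s * (IZR (a i) - h i * (P * dot a / A)).
Proof.
  intros Hi Hs Hle. pose proof A_ge1 as HA.
  pose proof (qf_add_sign a i s _ Hi Hs eq_refl) as Hstep.
  destruct (Req_dec (P * h i) 0) as [HPh|HPh].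
  - assert (Hhx : h i * (P * dot a / A) = 0)
      by (replace (h i * (P * dot a / A)) with (P * h i * dot a / A) by (field; lra);
          rewrite HPh; field; lra).
    rewrite Hhx, Rminus_0_r, <- mult_IZR.
    assert (Hsa : - / 2 <= IZR (s * a i)).
    { rewrite mult_IZR.
      assert (P * h i ^ 2 = 0) by (replace (P * h i ^ 2) with (P * h i * h i) by ring;
                                   rewrite HPh; ring).
      rewrite Hhx in Hstep. nra. }
    apply Zge0_of_IZR_ge_neg_half, IZR_le in Hsa. lra.
  - assert (0 < P * h i ^ 2).
    { assert (P <> 0) by (intros ->; apply HPh; ring).
      assert (h i <> 0) by (intros Hh; apply HPh; rewrite Hh; ring).
      assert (0 < h i * h i) by (destruct (Rlt_or_le 0 (h i)); nra).
      nra. }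
    nra.
Qed.

End QuadraticForm.

Lemma add_unit_zero_or_nonzero n a i s :
  (forall j, (j < n)%nat -> add_unit a i s j = 0%Z) \/ Defs.nonzero n (add_unit a i s).
Proof.
  destruct (classic (Defs.nonzero n (add_unit a i s))) as [H|H]; [now right|left].
  intros j Hj. destruct (Z.eq_dec (add_unit a i s j) 0) as [e|e]; [exact e|].
  exfalso. apply H. now exists j.
Qed.

Theorem theorem1 (n : nat) (P : R) (h : nat -> R) (astar : nat -> Z)
  (Hn : (1 <= n)%nat) (HP : 0 <= P)
  (Hmin : is_minimizer n P h astar) :
  (exists i, (i < n)%nat /\
     ((forall j, (j < n)%nat -> astar j = unitZ i j) \/
      (forall j, (j < n)%nat -> astar j = (- unitZ i j)%Z)))
  \/
  (exists x : R,
     (forall i, (i < n)%nat ->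
        IZR (astar i) - / 2 < h i * x /\ h i * x < IZR (astar i) + / 2) /\
     (forall i, (i < n)%nat -> astar i = round (h i * x))).
Proof.
  destruct Hmin as [_ Hle].
  destruct (classic (exists i s, (i < n)%nat /\ (s = 1 \/ s = -1)%Z /\
               forall j, (j < n)%nat -> add_unit astar i s j = 0%Z))
    as [[i [s [Hi [Hs Hz]]]] | Hno].
  - left. exists i. split; [exact Hi|].
    unfold add_unit in Hz.
    destruct Hs as [-> | ->]; [right | left]; intros j Hj; specialize (Hz j Hj); lia.
  - set (x := P * vsum n (fun i => h i * IZR (astar i)) / (1 + P * normsq n h)).
    assert (Hbound : forall i s, (i < n)%nat -> (s = 1 \/ s = -1)%Z ->
              - / 2 < IZR s * (IZR (astar i) - h i * x)).
    { intros i s Hi Hs. apply sign_step_bound; try assumption. apply Hle.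
      destruct (add_unit_zero_or_nonzero n astar i s) as [Hz|Hnz]; [|exact Hnz].
      exfalso. apply Hno. now exists i, s. }
    assert (Hx : forall i, (i < n)%nat ->
              IZR (astar i) - / 2 < h i * x /\ h i * x < IZR (astar i) + / 2).
    { intros i Hi.
      pose proof (Hbound i 1%Z Hi (or_introl eq_refl)).
      pose proof (Hbound i (-1)%Z Hi (or_intror eq_refl)).
      simpl IZR in *. lra. }
    right. exists x. split; [exact Hx|].
    intros i Hi. specialize (Hx i Hi). apply Int_part_spec. lra.
Qed.
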